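(* Let $R$ be a commutative ring with identity, let $I,J$ be finitely generated ideals of $R$, and let $N$ be an injective $R$-module. If $M$ is an $(I,J)$-prime $R$-module, then $\operatorname{Hom}_R(M,N)$ is an $(I,J)$-coprime $R$-module.
   Context: All rings are commutative with identity and modules are unital. An $R$-module $M$ is $(I,J)$-prime if for all $m\in M$, $IJm=0$ implies $Im=0$ or $Jm=0$. It is $(I,J)$-coprime if $IJM=IM$ or $IJM=JM$. *)

From HB Require Import structures.
From mathcomp Require Import all_boot all_order all_algebra.
From mathcomp Require Import boolp classical_sets functions.
Set Implicit Arguments. Unset Strict Implicit. Unset Printing Implicit Defensive.
Import GRing.Theory.
Local Open Scope ring_scope.

Section Hom.
Variables (R : comPzRingType) (M N : lmodType R).

Definition linearb : {pred M -> N} := fun f => `[< linear f >].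

Lemma linearb_submod : submod_closed linearb.
Proof.
split.
  by apply/asboolP => a x y; rewrite /= !scaler0 addr0.
move=> a f g /asboolP lf /asboolP lg; apply/asboolP => b x y /=.
have E z : (a *: f + g) z = a *: f z + g z by [].
rewrite !E lf lg !scalerDr !scalerA mulrC.
by rewrite addrACA.
Qed.

HB.instance Definition _ :=
  GRing.isSubmodClosed.Build R (M -> N) linearb linearb_submod.

Record homR := HomR { hom_val :> M -> N; hom_valP : hom_val \in linearb }.
HB.instance Definition _ := [isSub for hom_val].
HB.instance Definition _ := [Choice of homR by <:].
HB.instance Definition _ := [SubChoice_isSubLmodule of homR by <:].
End Hom.

Section Notions.
Variable R : comPzRingType.

Definition is_ideal (I : R -> Prop) : Prop :=
  [/\ I 0, (forall a b, I a -> I b -> I (a + b)) & (forall r a, I a -> I (r * a))].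

Definition fg_ideal (I : R -> Prop) : Prop :=
  exists s : seq R, forall x, I x <->
    exists c : 'I_(size s) -> R, x = \sum_(i < size s) c i * s`_i.

Definition prod_ideal (I J : R -> Prop) : R -> Prop := fun x =>
  exists n (a b : 'I_n -> R), (forall i, I (a i) /\ J (b i)) /\
    x = \sum_(i < n) a i * b i.

Definition ideal_smul (I : R -> Prop) (V : lmodType R) : V -> Prop := fun v =>
  exists n (a : 'I_n -> R) (m : 'I_n -> V), (forall i, I (a i)) /\
    v = \sum_(i < n) a i *: m i.

Definition ann_by (I : R -> Prop) (V : lmodType R) (m : V) : Prop :=
  forall x, I x -> x *: m = 0.

Definition IJ_prime (I J : R -> Prop) (V : lmodType R) : Prop :=
  forall m : V, ann_by (prod_ideal I J) m -> ann_by I m \/ ann_by J m.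

Definition IJ_coprime (I J : R -> Prop) (V : lmodType R) : Prop :=
  (forall v : V, ideal_smul (prod_ideal I J) v <-> ideal_smul I v) \/
  (forall v : V, ideal_smul (prod_ideal I J) v <-> ideal_smul J v).

Definition injective_module (N : lmodType R) : Prop :=
  forall (A B : lmodType R) (f : {linear A -> B}), injective f ->
  forall g : {linear A -> N}, exists h : {linear B -> N}, forall a, h (f a) = g a.
End Notions.

(* Since M is (I,J)-prime, either every m with IJm = 0 has Im = 0, or every such m has Jm = 0;
   say the former.  Let c_k run through the products s_p t_q of generators of I and J.  An
   element f = sum_i a_i g_i of I Hom(M,N) kills every m with c_k m = 0 for all k, i.e. it
   vanishes on the kernel of m |-> (c_k m)_k : M -> M^T.  So f factors through the image of this
   map, and injectivity of N extends the factor to some h : M^T -> N.  With e_k the k-th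
   coordinate embedding M -> M^T this gives f = sum_k c_k (h o e_k) in IJ Hom(M,N). *)

From HB Require Import structures.
From mathcomp Require Import all_boot all_order all_algebra.
From mathcomp Require Import boolp classical_sets functions.
Set Implicit Arguments. Unset Strict Implicit. Unset Printing Implicit Defensive.
Import GRing.Theory.
Local Open Scope ring_scope.

Section HomEval.
Variables (R : comPzRingType) (M N : lmodType R).

Lemma homR_linear (f : homR M N) : linear f.
Proof. exact: asboolW (hom_valP f). Qed.

HB.instance Definition _ (f : homR M N) :=
  GRing.isLinear.Build R M N _ (hom_val f) (homR_linear f).

Lemma homR_ext (f g : homR M N) : f =1 g -> f = g.
Proof. by move=> fg; apply: val_inj; apply/funext. Qed.

Lemma homR_sumE (T : Type) (r : seq T) (F : T -> homR M N) m :
  (\sum_(i <- r) F i) m = \sum_(i <- r) F i m.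
Proof. by rewrite -[LHS]/(val (\sum_(i <- r) F i) m) raddf_sum fct_sumE. Qed.

Lemma homR_scaleE a (f : homR M N) m : (a *: f) m = a *: f m.
Proof. by []. Qed.

Definition homR_of_linear (g : {linear M -> N}) : homR M N :=
  HomR (asboolT (@linearP _ _ _ _ g) : (g : M -> N) \in @linearb R M N).

End HomEval.

Section InjectiveFactor.
Variables (R : comPzRingType) (M P N : lmodType R) (phi : {linear M -> P}).

Definition linear_image : {pred P} := fun p => `[< exists m, phi m = p >].

Lemma linear_image_submod_closed : submod_closed linear_image.
Proof.
split; first by apply/asboolP; exists 0; rewrite linear0.
move=> a _ _ /asboolP[x <-] /asboolP[y <-]; apply/asboolP.
by exists (a *: x + y); rewrite linearP.
Qed.

HB.instance Definition _ :=
  GRing.isSubmodClosed.Build R P linear_image linear_image_submod_closed.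

Record image_sub := ImageSub { image_val :> P; image_valP : image_val \in linear_image }.
HB.instance Definition _ := [isSub for image_val].
HB.instance Definition _ := [Choice of image_sub by <:].
HB.instance Definition _ := [SubChoice_isSubLmodule of image_sub by <:].
HB.instance Definition _ :=
  GRing.isLinear.Build R image_sub P _ image_val (fun _ _ _ => erefl).

Definition image_pre (p : image_sub) : M := xget 0 [set m | phi m = val p].

Lemma image_preK p : phi (image_pre p) = val p.
Proof.
apply: (xgetPex 0 (P := [set m | phi m = val p])).
by have /asboolP[m hm] := image_valP p; exists m.
Qed.

Variables (f : {linear M -> N}) (f_ker : forall m, phi m = 0 -> f m = 0).

Lemma linear_eq_of_phi x y : phi x = phi y -> f x = f y.
Proof.
move=> /eqP; rewrite -subr_eq0 -linearB => /eqP/f_ker/eqP.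
by rewrite linearB subr_eq0 => /eqP.
Qed.

Definition factor_on_image (p : image_sub) : N := f (image_pre p).

Lemma factor_on_image_linear : linear factor_on_image.
Proof.
move=> a p q; rewrite /factor_on_image -linearP; apply: linear_eq_of_phi.
by rewrite linearP !image_preK.
Qed.

HB.instance Definition _ :=
  GRing.isLinear.Build R image_sub N _ factor_on_image factor_on_image_linear.

Lemma injective_module_factor : injective_module N ->
  exists h : {linear P -> N}, forall m, h (phi m) = f m.
Proof.
move=> injN; have [h hK] := injN _ _ image_val val_inj factor_on_image.
exists h => m; have im : phi m \in linear_image by apply/asboolP; exists m.
rewrite (hK (ImageSub im)); apply: linear_eq_of_phi.
by rewrite image_preK.
Qed.

End InjectiveFactor.

Section HomDecomposition.
Variables (R : comPzRingType) (M N : lmodType R) (T : finType) (c : T -> R).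

Definition scalings (m : M) : T -> M := fun i => c i *: m.

Lemma scalings_linear : linear scalings.
Proof.
move=> a x y; apply/funext => i.
rewrite -[RHS]/(a *: (c i *: x) + c i *: y) /scalings.
by rewrite scalerDr !scalerA mulrC.
Qed.

HB.instance Definition _ := GRing.isLinear.Build R M (T -> M) _ scalings scalings_linear.

Definition coord_embed (i : T) (m : M) : T -> M := fun j => if j == i then m else 0.

Lemma coord_embed_linear i : linear (coord_embed i).
Proof.
move=> a x y; apply/funext => j.
rewrite -[RHS]/(a *: coord_embed i x j + coord_embed i y j) /coord_embed.
by case: (j == i); rewrite ?scaler0 ?addr0.
Qed.

HB.instance Definition _ i :=
  GRing.isLinear.Build R M (T -> M) _ (coord_embed i) (coord_embed_linear i).

Lemma scalings_sum_coord m : scalings m = \sum_i coord_embed i (c i *: m).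
Proof.
apply/funext => j; rewrite fct_sumE /coord_embed (bigD1 j) //= eqxx.
by rewrite big1 ?addr0 // => k /negbTE; rewrite eq_sym => ->.
Qed.

Lemma hom_decomposition (f : homR M N) : injective_module N ->
    (forall m, (forall i, c i *: m = 0) -> f m = 0) ->
  exists g : T -> homR M N, f = \sum_i c i *: g i.
Proof.
move=> injN f_ann.
have f_ker m : scalings m = 0 -> f m = 0.
  by move=> hm; apply: f_ann => i; rewrite -[_ *: m]/(scalings m i) hm.
have [h hK] := injective_module_factor f_ker injN.
exists (fun i => homR_of_linear (h \o coord_embed i)).
apply: homR_ext => m.
rewrite homR_sumE -hK /= scalings_sum_coord linear_sum.
by apply: eq_bigr => i _; rewrite !linearZ.
Qed.

End HomDecomposition.

Section Ideals.
Variable R : comPzRingType.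
Implicit Types (I J K : R -> Prop) (s t : seq R).

Definition generated_by I s : Prop :=
  forall x, I x <-> exists c : 'I_(size s) -> R, x = \sum_(i < size s) c i * s`_i.

Lemma generated_by_mem I s : generated_by I s -> forall k : 'I_(size s), I s`_k.
Proof.
move=> gen k; apply/gen; exists (fun i => (i == k)%:R).
rewrite (bigD1 k) //= eqxx mul1r big1 ?addr0 // => i /negbTE ->.
by rewrite mul0r.
Qed.

Lemma ann_by_generated (V : lmodType R) I s (v : V) : generated_by I s ->
  (forall k : 'I_(size s), s`_k *: v = 0) -> ann_by I v.
Proof.
move=> gen sv x /gen[c ->]; rewrite scaler_suml big1 // => i _.
by rewrite -scalerA sv scaler0.
Qed.

Lemma ann_by_prod_generated (V : lmodType R) I J s t (v : V) :
    generated_by I s -> generated_by J t ->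
    (forall (p : 'I_(size s)) (q : 'I_(size t)), (s`_p * t`_q) *: v = 0) ->
  ann_by (prod_ideal I J) v.
Proof.
move=> genI genJ stv x [n [a [b [ab ->]]]]; rewrite scaler_suml big1 // => i _.
have [Ia Jb] := ab i; rewrite -scalerA; apply: (ann_by_generated genI _ Ia) => p.
rewrite scalerA mulrC -scalerA; apply: (ann_by_generated genJ _ Jb) => q.
by rewrite scalerA mulrC stv.
Qed.

Lemma prod_ideal_mul I J a b : I a -> J b -> prod_ideal I J (a * b).
Proof. by move=> Ia Jb; exists 1%N, (fun=> a), (fun=> b); rewrite big_ord1. Qed.

Lemma prod_idealC I J x : prod_ideal I J x -> prod_ideal J I x.
Proof.
case=> n [a [b [ab ->]]]; exists n, b, a; split; first by move=> i; case: (ab i).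
by apply: eq_bigr => i _; rewrite mulrC.
Qed.

Lemma prod_ideal_subr I J : is_ideal J -> forall x, prod_ideal I J x -> J x.
Proof.
case=> J0 JD JM x [n [a [b [ab ->]]]].
by apply: (big_ind J) => // i _; apply/JM/(ab i).2.
Qed.

Lemma ideal_smul_sub (V : lmodType R) K K' (v : V) :
  (forall x, K x -> K' x) -> ideal_smul K v -> ideal_smul K' v.
Proof. by move=> KK' [n [a [m [Ka ->]]]]; exists n, a, m; split => // i; apply: KK'. Qed.

Lemma ideal_smul_sum (V : lmodType R) K (T : finType) (c : T -> R) (g : T -> V) :
  (forall i, K (c i)) -> ideal_smul K (\sum_i c i *: g i).
Proof.
move=> Kc; exists #|T|, (c \o enum_val), (g \o enum_val); split=> [k|]; first exact: Kc.
by rewrite -[LHS](@eq_bigl _ _ _ _ _ (fun i => i \in T)) // big_enum_val.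
Qed.

(* The submodule {v | IJv = 0} is the union of its submodules {v | Iv = 0} and {v | Jv = 0},
   and a group is never the union of two proper subgroups. *)
Lemma IJ_prime_uniform I J (V : lmodType R) : IJ_prime I J V ->
  (forall v : V, ann_by (prod_ideal I J) v -> ann_by I v) \/
  (forall v : V, ann_by (prod_ideal I J) v -> ann_by J v).
Proof.
have annD L (u w : V) : ann_by L u -> ann_by L w -> ann_by L (u + w).
  by move=> Lu Lw x Lx; rewrite scalerDr Lu ?Lw ?addr0.
have annB L (u w : V) : ann_by L u -> ann_by L w -> ann_by L (u - w).
  by move=> Lu Lw x Lx; rewrite scalerDr scalerN Lu ?Lw ?subrr.
move=> Vprime.
case: (EM (forall v : V, ann_by (prod_ideal I J) v -> ann_by I v)) => [|notI]; first by left.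
right=> w IJw; have [u IJu notIu] := (existsPNP _ _).2 notI.
have Ju : ann_by J u by case: (Vprime u IJu).
case: (Vprime w IJw) => [Iw|//].
case: (Vprime (u + w) (annD _ _ _ IJu IJw)) => [Iuw|Juw].
  by case: notIu; have := annB _ _ _ Iuw Iw; rewrite addrK.
by have := annB _ _ _ Juw Ju; rewrite [u + w]addrC addrK.
Qed.

End Ideals.

Lemma hom_ideal_smul_prod (R : comPzRingType) (I J : R -> Prop)
    (fgI : fg_ideal I) (fgJ : fg_ideal J) (M N : lmodType R) :
    injective_module N ->
    (forall m : M, ann_by (prod_ideal I J) m -> ann_by I m) ->
  forall v : homR M N, ideal_smul I v -> ideal_smul (prod_ideal I J) v.
Proof.
case: fgI => s genI; case: fgJ => t genJ injN IJ_I v [n [a [g [Ia ->]]]].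
pose c (pq : 'I_(size s) * 'I_(size t)) := s`_pq.1 * t`_pq.2.
have v_ann m : (forall pq, c pq *: m = 0) -> (\sum_i a i *: g i) m = 0.
  move=> cm; have Im := IJ_I m (ann_by_prod_generated genI genJ (fun p q => cm (p, q))).
  by rewrite homR_sumE big1 // => i _; rewrite homR_scaleE -linearZ Im ?linear0.
have [h ->] := hom_decomposition injN v_ann.
by apply: ideal_smul_sum => pq; apply: prod_ideal_mul; apply: generated_by_mem.
Qed.

Theorem mainTheorem5 (R : comPzRingType) (I J : R -> Prop)
  (hI : is_ideal I) (hJ : is_ideal J) (fgI : fg_ideal I) (fgJ : fg_ideal J)
  (M N : lmodType R) (hN : injective_module N) :
  IJ_prime I J M -> IJ_coprime I J (homR M N).
Proof.
move=> Mprime; case: (IJ_prime_uniform Mprime) => [IJ_I|IJ_J]; [left|right] => v; split.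
- by apply: ideal_smul_sub => x /prod_idealC; apply: prod_ideal_subr.
- exact: hom_ideal_smul_prod.
- exact: ideal_smul_sub (prod_ideal_subr hJ).
- have JI_J (m : M) : ann_by (prod_ideal J I) m -> ann_by J m.
    by move=> JIm; apply: IJ_J => x /prod_idealC; apply: JIm.
  move=> /(hom_ideal_smul_prod fgJ fgI hN JI_J).
  by apply: ideal_smul_sub => x /prod_idealC.
Qed.
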